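(* Let $Q=(Q_0,Q_1,\rho)$ be a finite $n$-properly-graded bound quiver with fixed basis $\mathcal M$ of $\Lambda_n$ as below. If $Q$ is nicely-graded, then $\mathbb Z|_{n-1}Q$ is also nicely-graded.
   Context: $k$ is a field. Bound quivers have relations that are linear combinations of paths of equal length $\ge 2$ with common source and target; paths are composed right to left; $s(p),t(p),l(p)$ denote source, target, length; $\Lambda=kQ/(\rho)$ is graded by path length and a bound path is a path with nonzero image. $Q$ is $n$-properly-graded if all maximal bound paths have length $n$. A walk is a sequence $w=(p_0,\dots,p_r)$ of paths with $l(p_h)>0$ for $0<h<r$, $t(p_{2h})=t(p_{2h+1})$, $s(p_{2h+1})=s(p_{2h+2})$, from $s(p_0)$ to $t(p_r)$ ($r$ even) or $s(p_r)$ ($r$ odd), cyclic if start equals end, with grade $\sum_h(-1)^hl(p_h)$; a quiver is nicely-graded if every cyclic walk has grade $0$. For $Q$ finite $n$-properly-graded, fix a basis $\mathcal M$ of $\Lambda_n$ consisting of images of maximal bound paths. The quiver $\mathbb Z|_{n-1}Q$ has vertex set $Q_0\times\mathbb Z$ and arrows $(\alpha,t):(i,t)\to(j,t)$ for each arrow $\alpha:i\to j$ of $Q$ and $t\in\mathbb Z$, and $(\beta_p,t):(t(p),t)\to(s(p),t+1)$ for each $p\in\mathcal M$ and $t\in\mathbb Z$. (Its relations, which play no role in being nicely-graded, are the lifts of the relations of the trivial extension $\Lambda\ltimes D\Lambda$.) *)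

From HB Require Import structures.
From mathcomp Require Import all_boot all_order all_algebra.
Set Implicit Arguments. Unset Strict Implicit. Unset Printing Implicit Defensive.
Import Order.TTheory GRing.Theory Num.Theory.
Local Open Scope ring_scope.

(* A quiver is given by a vertex type V, an arrow type A and maps      *)
(* src tgt : A -> V.  A path is a pair (v, [:: a_1; ...; a_m]) with    *)
(* starting vertex v and arrows listed in the order they are traversed *)
(* (so it denotes the composite a_m ... a_1, composition right to     *)
(* left); (v, [::]) is the trivial path e_v.                           *)

Section Quiver.
Variables (V A : Type) (src tgt : A -> V).

Definition qpath := (V * seq A)%type.

Fixpoint arrows_ok (v : V) (s : seq A) : Prop :=
  match s with
  | [::] => True
  | a :: s' => src a = v /\ arrows_ok (tgt a) s'
  end.

Definition path_ok (p : qpath) : Prop := arrows_ok p.1 p.2.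
Definition psrc (p : qpath) : V := p.1.
Definition ptgt (p : qpath) : V := last p.1 (map tgt p.2).
Definition plen (p : qpath) : nat := size p.2.

(* A walk w = (p_0, ..., p_r), given as p0 :: ps (so r = size ps). *)
Definition is_walk (p0 : qpath) (ps : seq qpath) : Prop :=
  let w := p0 :: ps in
  [/\ forall h, (h < size w)%N -> path_ok (nth p0 w h),
      forall h, (0 < h)%N -> (h < size w - 1)%N -> (0 < plen (nth p0 w h))%N &
      forall h, (h.+1 < size w)%N ->
        if odd h then psrc (nth p0 w h) = psrc (nth p0 w h.+1)
        else ptgt (nth p0 w h) = ptgt (nth p0 w h.+1)].

Definition walk_start (p0 : qpath) (ps : seq qpath) : V := psrc p0.

Definition walk_end (p0 : qpath) (ps : seq qpath) : V :=
  let r := size ps in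
  let pr := nth p0 (p0 :: ps) r in
  if odd r then psrc pr else ptgt pr.

Definition walk_grade (p0 : qpath) (ps : seq qpath) : int :=
  let w := p0 :: ps in
  \sum_(h < size w) (-1) ^+ h * ((plen (nth p0 w h) : nat) : int).

Definition nicely_graded : Prop :=
  forall (p0 : qpath) (ps : seq qpath),
    is_walk p0 ps -> walk_start p0 ps = walk_end p0 ps ->
    walk_grade p0 ps = 0.

End Quiver.

(* Elements of kQ are represented as coefficient functions path -> k. *)

Section BoundQuiver.
Variables (k : fieldType) (V A : finType) (src tgt : A -> V).

Local Notation path := (qpath V A).

Definition pvec (p : path) : path -> k := fun q => (q == p)%:R.

Definition relation := seq (k * path).

Definition rel_vec (r : relation) : path -> k :=
  fun q => \sum_(x <- r) x.1 * (x.2 == q)%:R.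

Definition is_relation (r : relation) : Prop :=
  (forall x, x \in r -> path_ok src tgt x.2 /\ (2 <= plen x.2)%N) /\
  (forall x y, x \in r -> y \in r ->
     [/\ plen x.2 = plen y.2, psrc x.2 = psrc y.2 &
         ptgt tgt x.2 = ptgt tgt y.2]).

(* the composite u p v (first v, then p, then u) if defined *)
Definition pcomp3 (u p v : path) : option path :=
  if (ptgt tgt v == psrc p) && (ptgt tgt p == psrc u)
  then Some (psrc v, v.2 ++ p.2 ++ u.2) else None.

Definition gen_vec (u : path) (r : relation) (v : path) : path -> k :=
  fun q => \sum_(x <- r) x.1 * (pcomp3 u x.2 v == Some q)%:R.

Definition in_ideal (rho : relation -> Prop) (x : path -> k) : Prop :=
  exists l : seq (k * path * relation * path),
    (forall e, e \in l ->
       [/\ rho e.1.2, path_ok src tgt e.1.1.2 & path_ok src tgt e.2]) /\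
    (forall q, x q = \sum_(e <- l) e.1.1.1 * gen_vec e.1.1.2 e.1.2 e.2 q).

Definition bound_path (rho : relation -> Prop) (p : path) : Prop :=
  path_ok src tgt p /\ ~ in_ideal rho (pvec p).

Definition maximal_bound_path (rho : relation -> Prop) (p : path) : Prop :=
  [/\ bound_path rho p,
      (forall a : A, src a = ptgt tgt p -> ~ bound_path rho (psrc p, rcons p.2 a)) &
      (forall a : A, tgt a = psrc p -> ~ bound_path rho (src a, a :: p.2))].

Definition properly_graded (rho : relation -> Prop) (n : nat) : Prop :=
  forall p, maximal_bound_path rho p -> plen p = n.

Definition is_top_basis (rho : relation -> Prop) (n m : nat)
    (M : 'I_m -> path) : Prop :=
  [/\ forall i, maximal_bound_path rho (M i),
      (forall c : 'I_m -> k,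
         in_ideal rho (fun q => \sum_i c i * pvec (M i) q) -> forall i, c i = 0) &
      (forall q, path_ok src tgt q -> plen q = n ->
         exists c : 'I_m -> k,
           in_ideal rho (fun x => pvec q x - \sum_i c i * pvec (M i) x))].

(* The quiver Z|_{n-1} Q : vertices Q_0 x Z, arrows (alpha, t) and
   (beta_p, t) for p in M. *)
Definition ZQ_arrow (m : nat) := ((A * int) + ('I_m * int))%type.

Definition ZQ_src (m : nat) (M : 'I_m -> path) (x : ZQ_arrow m) : V * int :=
  match x with
  | inl (a, t) => (src a, t)
  | inr (i, t) => (ptgt tgt (M i), t)
  end.

Definition ZQ_tgt (m : nat) (M : 'I_m -> path) (x : ZQ_arrow m) : V * int :=
  match x with
  | inl (a, t) => (tgt a, t)
  | inr (i, t) => (psrc (M i), t + 1)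
  end.

End BoundQuiver.

From mathcomp Require Import all_boot all_order all_algebra.
From mathcomp Require Import ring lra.
Set Implicit Arguments. Unset Strict Implicit. Unset Printing Implicit Defensive.
Import Order.TTheory GRing.Theory Num.Theory.
Local Open Scope ring_scope.

(* A walk is the same thing as a zigzag in the underlying graph, i.e. a
   sequence of arrows each traversed forwards or backwards, its grade being
   the number of forward minus the number of backward steps; so a quiver is
   nicely graded iff every closed zigzag has as many forward as backward
   steps.  A closed zigzag in Z|_{n-1}Q unfolds to a closed zigzag in Q by
   replacing each step along a new arrow beta_p by p, traversed in the
   opposite direction.  Such a step changes the Z-coordinate by +-1, so on a
   closed zigzag the up- and down-steps are equally many; as unfolding trades
   the grade +-1 of such a step for -+n, the total grade is unchanged. *)

Section Zigzags.
Variables (V A : Type) (src tgt : A -> V).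
Local Notation path := (qpath V A).

(* A step [(a, true)] runs along the arrow [a], a step [(a, false)] against it. *)
Definition step_src (x : A * bool) : V := if x.2 then src x.1 else tgt x.1.
Definition step_tgt (x : A * bool) : V := if x.2 then tgt x.1 else src x.1.
Definition step_sign (x : A * bool) : int := if x.2 then 1 else -1.

Fixpoint zigzag_ok (v : V) (s : seq (A * bool)) : Prop :=
  if s is x :: s' then step_src x = v /\ zigzag_ok (step_tgt x) s' else True.

Definition zigzag_end (v : V) (s : seq (A * bool)) : V := last v (map step_tgt s).

Definition zigzag_grade (s : seq (A * bool)) : int := \sum_(x <- s) step_sign x.

Lemma zigzag_end_cons v x s : zigzag_end v (x :: s) = zigzag_end (step_tgt x) s.
Proof. by []. Qed.

Lemma zigzag_ok_cat v s1 s2 :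
  zigzag_ok v (s1 ++ s2) <-> zigzag_ok v s1 /\ zigzag_ok (zigzag_end v s1) s2.
Proof. by elim: s1 v => [|x s1 IH] v /=; [tauto | rewrite IH; tauto]. Qed.

Lemma zigzag_end_cat v s1 s2 :
  zigzag_end v (s1 ++ s2) = zigzag_end (zigzag_end v s1) s2.
Proof. by rewrite /zigzag_end map_cat last_cat. Qed.

Lemma zigzag_grade_cat s1 s2 :
  zigzag_grade (s1 ++ s2) = zigzag_grade s1 + zigzag_grade s2.
Proof. exact: big_cat. Qed.

Definition flip_step (x : A * bool) : A * bool := (x.1, ~~ x.2).

Definition zigzag_rev (s : seq (A * bool)) : seq (A * bool) := rev (map flip_step s).

Lemma zigzag_rev_ok v s : zigzag_ok v s ->
  zigzag_ok (zigzag_end v s) (zigzag_rev s) /\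
  zigzag_end (zigzag_end v s) (zigzag_rev s) = v.
Proof.
elim: s v => [|x s IH] v //= [<- ok_s].
have [ok_rev end_rev] := IH _ ok_s.
rewrite zigzag_end_cons /zigzag_rev map_cons rev_cons -cats1 -/(zigzag_rev s).
rewrite zigzag_ok_cat zigzag_end_cat end_rev.
by split; first split=> //; case: {ok_s ok_rev end_rev}x => a [].
Qed.

Lemma zigzag_rev_grade s : zigzag_grade (zigzag_rev s) = - zigzag_grade s.
Proof.
rewrite /zigzag_grade /zigzag_rev big_rev big_map -sumrN.
by apply: eq_bigr => -[a []].
Qed.

Definition dsrc (b : bool) (p : path) : V := if b then ptgt tgt p else psrc p.
Definition dtgt (b : bool) (p : path) : V := if b then psrc p else ptgt tgt p.

Definition path_steps (b : bool) (p : path) : seq (A * bool) :=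
  let s := [seq (a, true) | a <- p.2] in if b then zigzag_rev s else s.

Lemma path_steps_ok b p : path_ok src tgt p ->
  zigzag_ok (dsrc b p) (path_steps b p) /\
  zigzag_end (dsrc b p) (path_steps b p) = dtgt b p.
Proof.
case: p => v l; rewrite /path_ok /= => ok_l.
have ok_fwd : zigzag_ok v [seq (a, true) | a <- l].
  by elim: l v ok_l => [|a l IH] v //= [<- /IH].
have end_fwd : zigzag_end v [seq (a, true) | a <- l] = last v (map tgt l).
  by rewrite /zigzag_end -map_comp.
by case: b; rewrite /dsrc /dtgt /path_steps /ptgt //= -end_fwd; apply: zigzag_rev_ok.
Qed.

Lemma path_steps_grade b p :
  zigzag_grade (path_steps b p) = (-1) ^+ b * (plen p)%:Z.
Proof.
have fwd : zigzag_grade [seq (a, true) | a <- p.2] = (plen p)%:Z.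
  by rewrite /zigzag_grade big_map /plen -sum1_size -natz natr_sum.
by case: b; rewrite /path_steps ?zigzag_rev_grade fwd ?expr1 ?mulN1r ?mul1r.
Qed.

(* [walkb b p ps]: the walk [p :: ps] whose first path is traversed backwards
   iff [b]; the walks of the definition are the case [b = false]. *)
Fixpoint walkb (b : bool) (p : path) (ps : seq path) : Prop :=
  path_ok src tgt p /\
  if ps is q :: ps' then
    [/\ dtgt b p = dsrc (~~ b) q, (ps' <> [::] -> (0 < plen q)%N) & walkb (~~ b) q ps']
  else True.

Fixpoint walkb_end (b : bool) (p : path) (ps : seq path) : V :=
  if ps is q :: ps' then walkb_end (~~ b) q ps' else dtgt b p.

Fixpoint walkb_grade (b : bool) (p : path) (ps : seq path) : int :=
  (-1) ^+ b * (plen p)%:Z + if ps is q :: ps' then walkb_grade (~~ b) q ps' else 0.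

Fixpoint walk_steps (b : bool) (p : path) (ps : seq path) : seq (A * bool) :=
  path_steps b p ++ if ps is q :: ps' then walk_steps (~~ b) q ps' else [::].

Lemma walk_steps_ok b p ps : walkb b p ps ->
  zigzag_ok (dsrc b p) (walk_steps b p ps) /\
  zigzag_end (dsrc b p) (walk_steps b p ps) = walkb_end b p ps.
Proof.
elim: ps b p => [|q ps IH] b p [ok_p link_ps] /=;
  have [ok_s end_s] := path_steps_ok b ok_p.
  by rewrite cats0.
case: link_ps => link _ /IH [ok_t end_t].
by rewrite zigzag_ok_cat zigzag_end_cat end_s link.
Qed.

Lemma walk_steps_grade b p ps :
  zigzag_grade (walk_steps b p ps) = walkb_grade b p ps.
Proof.
elim: ps b p => [|q ps IH] b p /=;
  by rewrite zigzag_grade_cat path_steps_grade ?IH // /zigzag_grade big_nil.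
Qed.

Lemma walkb_nth b p ps : walkb b p ps <->
  let w := p :: ps in
  [/\ forall h, (h <= size ps)%N -> path_ok src tgt (nth p w h),
      forall h, (0 < h)%N -> (h < size ps)%N -> (0 < plen (nth p w h))%N &
      forall h, (h < size ps)%N ->
        dtgt (odd h (+) b) (nth p w h) = dsrc (~~ (odd h (+) b)) (nth p w h.+1)].
Proof.
have odd_addS h c : odd h.+1 (+) c = odd h (+) ~~ c by rewrite /= addNb addbN.
elim: ps b p => [|q ps IH] b p /=.
  split=> [[ok_p _]|[ok_p _ _]]; last by split=> //; apply: (ok_p 0%N).
  by split=> // h; rewrite leqn0 => /eqP ->.
split.
- case=> ok_p [link pos_q /IH [ok_w pos_w link_w]]; split.
  + case=> [|h] //= h_le.
    by rewrite (set_nth_default q) ?ltnS //; apply: ok_w.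
  + case=> [|[|h]] //= _; first by case: ps {IH ok_w pos_w link_w} pos_q => // r ps ->.
    rewrite ltnS => h_lt; rewrite (set_nth_default q) ?(ltnW h_lt) //.
    exact: (pos_w h.+1 isT h_lt).
  + case=> [|h] //=; rewrite ltnS => h_lt.
    have h_lt' : (h < size (q :: ps))%N by exact: ltnW.
    rewrite [nth p ps h](set_nth_default q) // (set_nth_default q _ h_lt').
    by rewrite odd_addS; apply: (link_w h h_lt).
- case=> ok_w pos_w link_w; split; first exact: (ok_w 0%N).
  split; first exact: (link_w 0%N).
  + by case: ps {IH ok_w link_w} pos_w => // r ps /(_ 1%N isT isT).
  + apply/IH; split.
    * move=> h h_le; rewrite (set_nth_default p) //; exact: (ok_w h.+1 h_le).
    * move=> h h_gt0 h_lt; have h_le : (h < size (q :: ps))%N := ltnW h_lt.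
      rewrite (set_nth_default p _ h_le); exact: (pos_w h.+1 isT h_lt).
    * move=> h h_lt; have h_le : (h < size (q :: ps))%N := ltnW h_lt.
      rewrite (set_nth_default p _ h_le).
      rewrite [nth q (q :: ps) h.+1](set_nth_default p) //.
      by rewrite -odd_addS; apply: (link_w h.+1 h_lt).
Qed.

Lemma is_walk_walkb p0 ps : is_walk src tgt p0 ps <-> walkb false p0 ps.
Proof.
rewrite walkb_nth /is_walk /= subn1 /=.
split=> -[ok_w pos_w link_w]; split=> // h /link_w;
  by rewrite addbF /dtgt /dsrc; case: (odd h).
Qed.

Lemma walkb_end_last b p ps :
  walkb_end b p ps = dtgt (odd (size ps) (+) b) (last p ps).
Proof. by elim: ps b p => [|q ps IH] b p //=; rewrite IH addbN addNb. Qed.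

Lemma walk_end_walkb p0 ps : walk_end tgt p0 ps = walkb_end false p0 ps.
Proof.
by rewrite walkb_end_last addbF /walk_end -[last p0 ps](nth_last p0 (p0 :: ps)).
Qed.

Lemma walkb_grade_sum b p ps : walkb_grade b p ps =
  \sum_(h < (size ps).+1) (-1) ^+ (b + h) * (plen (nth p (p :: ps) h))%:Z.
Proof.
elim: ps b p => [|q ps IH] b p; first by rewrite big_ord_recl big_ord0 /= addn0.
rewrite big_ord_recl /= IH addn0; congr (_ + _); apply: eq_bigr => i _.
rewrite add0n [nth p _ _](set_nth_default q) // /bump /= add1n.
by case: b; rewrite /= ?add0n ?add1n // !exprS !mulN1r opprK.
Qed.

Lemma walk_grade_walkb p0 ps : walk_grade p0 ps = walkb_grade false p0 ps.
Proof. by rewrite walkb_grade_sum; apply: eq_bigr => i _; rewrite add0n. Qed.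

Lemma arrows_ok_rcons v l a : arrows_ok src tgt v (rcons l a) <->
  arrows_ok src tgt v l /\ src a = last v (map tgt l).
Proof. by elim: l v => [|x l IH] v /=; [tauto | rewrite IH; tauto]. Qed.

(* [path_cons x p] extends [p], traversed against the direction of [x], so
   that it begins with the step [x]. *)
Definition path_cons (x : A * bool) (p : path) : path :=
  if x.2 then (src x.1, x.1 :: p.2) else (p.1, rcons p.2 x.1).

Lemma path_cons_ok x p : path_ok src tgt p -> dsrc (~~ x.2) p = step_tgt x ->
  [/\ path_ok src tgt (path_cons x p), dsrc (~~ x.2) (path_cons x p) = step_src x,
      dtgt (~~ x.2) (path_cons x p) = dtgt (~~ x.2) p &
      plen (path_cons x p) = (plen p).+1].
Proof.
case: x => a []; case: p => v l;
  rewrite /path_ok /dsrc /dtgt /path_cons /step_src /step_tgt /psrc /ptgt /plen /=.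
- by move=> ok_l tgt_a; rewrite -tgt_a.
- move=> ok_l end_l; rewrite map_rcons last_rcons size_rcons.
  by split=> //; apply/arrows_ok_rcons.
Qed.

Lemma walkb_head_ok b p ps : walkb b p ps -> path_ok src tgt p.
Proof. by case: ps => [|q ps] []. Qed.

Lemma walkb_replace_head b p p' ps : walkb b p ps -> path_ok src tgt p' ->
  dtgt b p' = dtgt b p ->
  [/\ walkb b p' ps, walkb_end b p' ps = walkb_end b p ps &
      walkb_grade b p' ps =
        walkb_grade b p ps + (-1) ^+ b * ((plen p')%:Z - (plen p)%:Z)].
Proof.
case: ps => [|q ps] [_ link] ok_p' tgt_p' /=; rewrite ?tgt_p'; split=> //; ring.
Qed.

Lemma walkb_of_zigzag v s b : zigzag_ok v s -> exists p ps,
  [/\ walkb b p ps, dsrc b p = v, walkb_end b p ps = zigzag_end v s &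
      walkb_grade b p ps = zigzag_grade s].
Proof.
elim: s v b => [|x s IH] v b.
  move=> _; exists (v, [::]), [::].
  by rewrite /zigzag_grade big_nil /= mulr0 addr0; case: b.
move=> [<- ok_s].
have [p [ps [walk_p src_p end_p grade_p]]] := IH _ (~~ x.2) ok_s.
have [ok_x src_x tgt_x len_x] := path_cons_ok (walkb_head_ok walk_p) src_p.
have [walk_x end_x grade_x] := walkb_replace_head walk_p ok_x tgt_x.
have {}grade_x : walkb_grade (~~ x.2) (path_cons x p) ps = zigzag_grade (x :: s).
  rewrite grade_x len_x grade_p /zigzag_grade big_cons -addn1 PoszD.
  by rewrite {2}/step_sign; case: x.2; ring.
have {}end_x : walkb_end (~~ x.2) (path_cons x p) ps = zigzag_end (step_src x) (x :: s).
  by rewrite end_x end_p.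
case: (eqVneq b (~~ x.2)) => [-> | /negPf b_x]; first by exists (path_cons x p), ps.
have {b_x} -> : b = x.2 by case: b x.2 b_x => [] [].
exists (step_src x, [::]), (path_cons x p :: ps).
split=> //=; [split=> //; split=> // | by case: x.2 | by rewrite mulr0 add0r].
- by rewrite src_x; case: x.2.
- by rewrite len_x.
Qed.

Lemma nicely_gradedP : nicely_graded src tgt <->
  forall v s, zigzag_ok v s -> zigzag_end v s = v -> zigzag_grade s = 0.
Proof.
split=> [NG v s ok_s closed | NZ p0 ps walk closed].
- have [p [ps [walk_p src_p end_p grade_p]]] := walkb_of_zigzag false ok_s.
  rewrite -grade_p -walk_grade_walkb; apply: NG; first exact/is_walk_walkb.
  by rewrite /walk_start walk_end_walkb end_p closed -src_p.
- move/is_walk_walkb: walk => walk.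
  have [ok_s end_s] := walk_steps_ok walk.
  rewrite walk_grade_walkb -walk_steps_grade; apply: NZ ok_s _.
  by rewrite end_s -walk_end_walkb -closed.
Qed.

End Zigzags.

Section Unfolding.
Variables (V A : finType) (src tgt : A -> V) (m n : nat) (M : 'I_m -> qpath V A).
Hypothesis M_ok : forall i, path_ok src tgt (M i).
Hypothesis M_len : forall i, plen (M i) = n.
Local Notation zsrc := (ZQ_src src tgt M).
Local Notation ztgt := (ZQ_tgt tgt M).

Definition unfold_step (x : ZQ_arrow A m * bool) : seq (A * bool) :=
  match x.1 with
  | inl (a, _) => [:: (a, x.2)]
  | inr (i, _) => path_steps x.2 (M i)
  end.

Definition level_step (x : ZQ_arrow A m * bool) : int :=
  if x.1 is inr _ then step_sign x else 0.

Definition zq_unfold (s : seq (ZQ_arrow A m * bool)) : seq (A * bool) :=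
  flatten (map unfold_step s).

Definition zq_level (s : seq (ZQ_arrow A m * bool)) : int := \sum_(x <- s) level_step x.

Lemma unfold_step_grade x :
  zigzag_grade (unfold_step x) = step_sign x - (n%:Z + 1) * level_step x.
Proof.
case: x => -[[a t]|[i t]] b; rewrite /unfold_step /level_step /=.
  by rewrite /zigzag_grade big_seq1 mulr0 subr0.
by rewrite path_steps_grade M_len /step_sign; case: b => /=; ring.
Qed.

Lemma zq_unfold_grade s :
  zigzag_grade (zq_unfold s) = zigzag_grade s - (n%:Z + 1) * zq_level s.
Proof.
rewrite /zigzag_grade /zq_unfold big_flatten big_map /zq_level mulr_sumr -sumrB.
by apply: eq_bigr => x _; apply: unfold_step_grade.
Qed.

Lemma unfold_step_ok x v t : step_src zsrc ztgt x = (v, t) ->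
  zigzag_ok src tgt v (unfold_step x) /\
  step_tgt zsrc ztgt x = (zigzag_end src tgt v (unfold_step x), t + level_step x).
Proof.
case: x => -[[a t']|[i t']] [];
  rewrite /step_src /step_tgt /unfold_step /level_step /step_sign /= => -[<- <-].
- by rewrite addr0.
- by rewrite addr0.
- by have [ok_i ->] := path_steps_ok true (M_ok i).
- by rewrite addrK; have [ok_i ->] := path_steps_ok false (M_ok i).
Qed.

Lemma zq_unfold_ok s v t : zigzag_ok zsrc ztgt (v, t) s ->
  zigzag_ok src tgt v (zq_unfold s) /\
  zigzag_end zsrc ztgt (v, t) s = (zigzag_end src tgt v (zq_unfold s), t + zq_level s).
Proof.
elim: s v t => [|x s IH] v t /=; first by rewrite /zq_level big_nil addr0.
move=> [/unfold_step_ok [ok_x tgt_x] ok_s].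
rewrite tgt_x in ok_s; have [ok_u end_u] := IH _ _ ok_s.
rewrite zigzag_ok_cat zigzag_end_cat zigzag_end_cons tgt_x end_u.
by rewrite /zq_level big_cons addrA.
Qed.

End Unfolding.

Theorem theorem4p7 (k : fieldType) (V A : finType) (src tgt : A -> V)
    (rho : relation k V A -> Prop) (n m : nat) (M : 'I_m -> qpath V A) :
  (forall r, rho r -> is_relation src tgt r) ->
  properly_graded src tgt rho n ->
  is_top_basis src tgt rho n M ->
  nicely_graded src tgt ->
  nicely_graded (ZQ_src src tgt M) (ZQ_tgt tgt M).
Proof.
(* Of the bound-quiver structure only the lengths of the basis paths matter. *)
move=> _ graded [M_max _ _] /nicely_gradedP Q_nice.
have M_ok i : path_ok src tgt (M i) by case: (M_max i) => -[].
have M_len i : plen (M i) = n by apply: graded.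
apply/nicely_gradedP => -[v t] s ok_s closed.
have [ok_u] := zq_unfold_ok M_ok ok_s; rewrite closed => -[closed_u level_t].
have level0 : zq_level s = 0 by lra.
have := Q_nice _ _ ok_u (esym closed_u).
by rewrite (zq_unfold_grade M_len) level0 mulr0 subr0.
Qed.
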